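(* Let $\Pi$ be the node-edge-checkable problem encoding maximal matching defined below, and $\Pi^*$ its node-list variant. Then for every valid input instance $(S,h_{\mathrm{in}})$ of $\Pi^*$ (on any finite semi-graph $S$), $\Pi^*$ admits a valid solution.
   Context: Semi-graph: a bipartite graph $S=(A\sqcup B,C)$ with every $b\in B$ of degree at most $2$; $A$ = nodes, $B$ = edges, $C$ = half-edges (incident node–edge pairs); degree of a node / rank of an edge = its degree in $S$. Node-edge-checkable problem $\Pi=(\Sigma,\mathcal N_\Pi,\mathcal E_\Pi)$: $\mathcal N_\Pi^i$ ($i\ge 0$) and $\mathcal E_\Pi^i$ ($i\in\{0,1,2\}$) are collections of cardinality-$i$ multisets over $\Sigma$. The problem $\Pi$: $\Sigma=\{M,P,O,D\}$. For each $i\ge 0$, $\mathcal N_\Pi^i$ consists of all cardinality-$i$ multisets $\{\chi_1,\dots,\chi_i\}$ over $\Sigma$ such that either (i) exactly one $\chi_j$ equals $M$ and all others lie in $\{P,O,D\}$, or (ii) all $\chi_k$ lie in $\{O,D\}$. $\mathcal E_\Pi^0=\{\emptyset\}$, $\mathcal E_\Pi^1=\{\{D\}\}$, $\mathcal E_\Pi^2=\{\{P,O\},\{M,M\},\{P,P\}\}$. Node-list variant $\Pi^*$: for $i,j\ge0$ and $\psi\in\mathcal N_\Pi^j$, $\mathcal N^i_{\Pi,\psi}$ is the set of cardinality-$i$ multisets $\chi$ over $\Sigma$ with $\chi\uplus\psi\in\mathcal N_\Pi^{i+j}$, and $\mathcal L^i=\{\mathcal N^i_{\Pi,\psi}:\psi\in\mathcal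 N_\Pi^j\text{ for some }j\ge0\}$. A valid input instance is $(S,h_{\mathrm{in}})$ with $h_{\mathrm{in}}(v)\in\mathcal L^{\deg(v)}$ for each node $v$. A valid solution is $h_{\mathrm{out}}:H(S)\to\Sigma$ such that for each node $v$ the multiset of labels on its incident half-edges lies in $h_{\mathrm{in}}(v)$, and for each edge $e$ the multiset of labels on its incident half-edges lies in $\mathcal E_\Pi^{\mathrm{rank}(e)}$. *)

From HB Require Import structures.
From mathcomp Require Import all_boot.
Set Implicit Arguments. Unset Strict Implicit. Unset Printing Implicit Defensive.

Inductive Sigma := M | P | O | D.

Definition Sigma_eqb (x y : Sigma) : bool :=
  match x, y with
  | M, M | P, P | O, O | D, D => true
  | _, _ => false
  end.

Lemma Sigma_eqP : Equality.axiom Sigma_eqb.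
Proof. by case; case; constructor. Qed.

HB.instance Definition _ := hasDecEq.Build Sigma Sigma_eqP.

(* Multisets over Sigma are represented by sequences; every predicate below
   depends only on the multiset (it is invariant under permutation); the
   cardinality of the multiset is [size s]. *)

(* Node constraint N_Pi (all cardinalities i at once): either exactly one
   label is M (and so all others are in {P,O,D}), or all labels are in {O,D}. *)
Definition N_Pi (s : seq Sigma) : bool :=
  (count (pred1 M) s == 1) || all (fun x => x \in [:: O; D]) s.

Definition E_Pi (s : seq Sigma) : bool :=
  match s with
  | [::] => true
  | [:: x] => x == D
  | [:: x; y] => perm_eq [:: x; y] [:: P; O] || perm_eq [:: x; y] [:: M; M]
                 || perm_eq [:: x; y] [:: P; P]
  | _ => false
  end.

(* A finite semi-graph: nodes A, edges B, half-edges C ⊆ A × B,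
   every edge has degree at most 2. *)
Definition semigraph (A B : finType) (C : {set A * B}) : Prop :=
  forall e : B, #|[set a : A | (a, e) \in C]| <= 2.

Definition node_deg (A B : finType) (C : {set A * B}) (v : A) : nat :=
  #|[set b : B | (v, b) \in C]|.

Definition N_list (i : nat) (psi : seq Sigma) (chi : seq Sigma) : Prop :=
  size chi = i /\ N_Pi (chi ++ psi).

Definition in_L (i : nat) (L : seq Sigma -> Prop) : Prop :=
  exists psi : seq Sigma, N_Pi psi /\ forall chi, L chi <-> N_list i psi chi.

Definition valid_input (A B : finType) (C : {set A * B})
    (h_in : A -> seq Sigma -> Prop) : Prop :=
  forall v : A, in_L (node_deg C v) (h_in v).

Definition node_labels (A B : finType) (C : {set A * B})
    (h_out : A * B -> Sigma) (v : A) : seq Sigma :=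
  [seq h_out (v, b) | b <- enum B & (v, b) \in C].

Definition edge_labels (A B : finType) (C : {set A * B})
    (h_out : A * B -> Sigma) (e : B) : seq Sigma :=
  [seq h_out (a, e) | a <- enum A & (a, e) \in C].

(* Valid solution: h_out labels half-edges (its values off C are irrelevant). *)
Definition valid_solution (A B : finType) (C : {set A * B})
    (h_in : A -> seq Sigma -> Prop) (h_out : A * B -> Sigma) : Prop :=
  (forall v : A, h_in v (node_labels C h_out v)) /\
  (forall e : B, E_Pi (edge_labels C h_out e)).

(* Fix for every node v a list psi v with N_Pi (psi v) realising h_in v.  A node
   whose psi contains M is already matched elsewhere; the others may still take
   one M.  Take a maximal matching S among the rank-2 edges all of whose
   endpoints may take an M, label S with M, rank-1 edges with D, and the other
   half-edges with P or O according to whether their node is saturated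
   (already matched elsewhere, or covered by S).  Maximality of S says that no
   rank-2 edge outside S has two unsaturated endpoints, i.e. none is labelled
   {O, O}; at an unsaturated node only O and D occur, at a node matched by S
   exactly one M occurs, and a node matched elsewhere receives no M. *)

From HB Require Import structures.
From mathcomp Require Import all_boot.
From Stdlib Require Import ClassicalEpsilon.

Set Implicit Arguments.
Unset Strict Implicit.
Unset Printing Implicit Defensive.

Lemma card_set_count (T : finType) (Q : pred T) :
  #|[set x | Q x]| = count Q (enum T).
Proof.
rewrite cardsE cardE /enum_mem -size_filter -filter_predI; congr size.
by apply: eq_filter => x /=; rewrite andbT.
Qed.

Section Matchings.

Variables (A B : finType) (C : {set A * B}).

Definition incident (S : {set B}) (v : A) : {set B} := [set e in S | (v, e) \in C].

Definition matching (S : {set B}) : bool := [forall v, #|incident S v| <= 1].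

Definition covered (S : {set B}) (v : A) : bool := incident S v != set0.

Lemma matching0 : matching set0.
Proof.
apply/forallP => v; rewrite (_ : incident set0 v = set0) ?cards0 //.
by apply/setP => e; rewrite !inE.
Qed.

Lemma matchingU1 S e :
  matching S -> (forall v, (v, e) \in C -> ~~ covered S v) -> matching (e |: S).
Proof.
move=> /forallP matS uncovered_e; apply/forallP => v.
case ve: ((v, e) \in C).
- have /negPn/eqP/setP incS0 := uncovered_e v ve.
  rewrite (_ : incident (e |: S) v = [set e]) ?cards1 //.
  apply/setP => f; rewrite !inE; case: eqP => [->|_]; first by rewrite ve.
  by have := incS0 f; rewrite !inE.
- rewrite (_ : incident (e |: S) v = incident S v) //.
  by apply/setP => f; rewrite !inE; case: eqP => // ->; rewrite ve !andbF.
Qed.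

(* A matching of maximum cardinality inside [cand] is maximal, by [matchingU1]. *)
Lemma exists_maximal_matching (cand : pred B) :
  exists S : {set B}, [/\ matching S, {subset S <= cand} &
    forall e, cand e -> e \notin S -> [exists v, ((v, e) \in C) && covered S v]].
Proof.
pose ok S := matching S && (S \subset [set e | cand e]).
have ok0 : ok set0 by rewrite /ok /= matching0 sub0set.
case: (arg_maxnP (fun S : {set B} => #|S|) ok0) => S /andP[matS subS] maxS.
exists S; split => //; first by move=> e /(subsetP subS); rewrite inE.
move=> e cand_e eS.
apply: contraT => /existsPn uncovered_e.
have : ok (e |: S).
  rewrite /ok /= subUset sub1set inE cand_e subS !andbT.
  by apply: matchingU1 => // v ve; have := uncovered_e v; rewrite ve.
by move=> /maxS; rewrite cardsU1 eS add1n /= ltnn.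
Qed.

End Matchings.

Definition matchable (s : seq Sigma) : bool := all (fun x => x \in [:: O; D]) s.

Lemma count_M_matchable s : matchable s -> count (pred1 M) s = 0.
Proof. by elim: s => //= -[] s IH /andP[]. Qed.

Lemma N_Pi_cat_matchable chi psi :
  matchable psi -> N_Pi (chi ++ psi) = N_Pi chi.
Proof.
move=> m_psi; rewrite /N_Pi count_cat (count_M_matchable m_psi) addn0 all_cat.
by move: m_psi; rewrite /matchable => ->; rewrite andbT.
Qed.

Lemma N_Pi_cat_unmatchable chi psi :
  N_Pi psi -> ~~ matchable psi -> N_Pi (chi ++ psi) = (M \notin chi).
Proof.
rewrite /N_Pi /matchable => N_psi nm_psi; rewrite (negbTE nm_psi) orbF in N_psi.
rewrite count_cat (eqP N_psi) all_cat (negbTE nm_psi) andbF orbF.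
by rewrite -has_pred1 has_count addn1 eqSS eqn0Ngt.
Qed.

Section Labelling.

Variables (A B : finType) (C : {set A * B}) (psi : A -> seq Sigma) (S : {set B}).

Definition rank (e : B) : nat := #|[set a | (a, e) \in C]|.

Definition saturated (v : A) : bool := ~~ matchable (psi v) || covered C S v.

Definition matching_labelling (p : A * B) : Sigma :=
  if p.2 \in S then M else if rank p.2 == 1 then D
  else if saturated p.1 then P else O.

Hypothesis N_Pi_psi : forall v, N_Pi (psi v).
Hypothesis matching_S : matching C S.
Hypothesis S_matchable : forall e, e \in S ->
  (rank e == 2) && [forall a, ((a, e) \in C) ==> matchable (psi a)].
Hypothesis S_maximal : forall e, rank e == 2 -> e \notin S ->
  [exists a, ((a, e) \in C) && saturated a].

Lemma count_M_node_labels v :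
  count (pred1 M) (node_labels C matching_labelling v) = #|incident C S v|.
Proof.
rewrite /node_labels count_map count_filter /incident card_set_count.
apply: eq_count => b; rewrite /matching_labelling /=.
by case: (b \in S) => //=; case: ifP => //; case: ifP.
Qed.

Lemma mem_M_node_labels v :
  (M \in node_labels C matching_labelling v) = covered C S v.
Proof. by rewrite -has_pred1 has_count count_M_node_labels card_gt0. Qed.

Lemma node_labels_valid v :
  N_Pi (node_labels C matching_labelling v ++ psi v).
Proof.
have [m_v|nm_v] := boolP (matchable (psi v)); last first.
  rewrite (N_Pi_cat_unmatchable _ (N_Pi_psi v) nm_v) mem_M_node_labels.
  apply/set0Pn => -[e]; rewrite inE => /andP[eS ve].
  by have /andP[_ /forallP/(_ v)] := S_matchable eS; rewrite ve (negbTE nm_v).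
rewrite N_Pi_cat_matchable // /N_Pi count_M_node_labels.
have [cov_v|uncov_v] := boolP (covered C S v).
  by rewrite eqn_leq (forallP matching_S v) card_gt0 -/(covered C S v) cov_v.
apply/orP; right; rewrite /node_labels all_map; apply/allP => b.
rewrite mem_filter => /andP[vb _] /=.
have bS : b \notin S.
  by apply: contra uncov_v => bS; apply/set0Pn; exists b; rewrite inE bS.
rewrite /matching_labelling /= (negbTE bS) /saturated m_v (negbTE uncov_v).
by case: ifP.
Qed.

Lemma edge_labels_valid e : semigraph C -> E_Pi (edge_labels C matching_labelling e).
Proof.
move=> semi_C; have rank_le2 : rank e <= 2 := semi_C e.
have rank_S : e \in S -> rank e = 2 by move=> /S_matchable /andP[/eqP].
set ends := [seq a <- enum A | (a, e) \in C].
have size_ends : size ends = rank e by rewrite size_filter /rank card_set_count.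
have sat_ends : rank e == 2 -> e \notin S -> has saturated ends.
  move=> rank2 eS; have /existsP[x /andP[xe sat_x]] := S_maximal rank2 eS.
  by apply/hasP; exists x; rewrite // mem_filter mem_enum xe.
rewrite /edge_labels -/ends /matching_labelling /=.
move: size_ends rank_le2 rank_S sat_ends.
case: ends => [|a [|b [|c ends]]] /= <- // _.
- by case: (e \in S) => // /(_ isT).
- case: (e \in S) => //= _ /(_ isT isT) /=.
  by case: (saturated a); case: (saturated b).
Qed.

End Labelling.

Lemma size_node_labels (A B : finType) (C : {set A * B}) (h : A * B -> Sigma) v :
  size (node_labels C h v) = node_deg C v.
Proof. by rewrite size_map size_filter /node_deg card_set_count. Qed.

Lemma exists_labelling (A B : finType) (C : {set A * B}) (psi : A -> seq Sigma) :
  semigraph C -> (forall v, N_Pi (psi v)) ->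
  exists h : A * B -> Sigma,
    (forall v, N_Pi (node_labels C h v ++ psi v)) /\
    (forall e, E_Pi (edge_labels C h e)).
Proof.
move=> semi_C N_Pi_psi.
pose cand e := (rank C e == 2) && [forall a, ((a, e) \in C) ==> matchable (psi a)].
have [S [matS S_cand S_max]] := exists_maximal_matching C cand.
have S_maximal e : rank C e == 2 -> e \notin S ->
    [exists a, ((a, e) \in C) && saturated C psi S a].
  move=> rank2 eS; apply/existsP; case cand_e: (cand e).
  - have /existsP[x /andP[xe cov_x]] := S_max e cand_e eS.
    by exists x; rewrite xe /saturated cov_x orbT.
  - move: cand_e; rewrite /cand rank2 /= => /negbT /forallPn[x].
    by rewrite negb_imply => /andP[xe nm_x]; exists x; rewrite xe /saturated nm_x.
exists (matching_labelling C psi S); split => [v|e].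
- exact: (node_labels_valid N_Pi_psi matS S_cand).
- exact: (edge_labels_valid S_cand S_maximal).
Qed.

Theorem mainTheorem10 (A B : finType) (C : {set A * B})
    (h_in : A -> seq Sigma -> Prop) :
  semigraph C -> valid_input C h_in ->
  exists h_out : A * B -> Sigma, valid_solution C h_in h_out.
Proof.
move=> semi_C valid_in.
have [psi psi_spec] := ClassicalEpsilon.choice _ valid_in.
have [h [nodes_ok edges_ok]] := exists_labelling semi_C (fun v => (psi_spec v).1).
exists h; split => // v; apply/(psi_spec v).2.
by split; [exact: size_node_labels | exact: nodes_ok].
Qed.
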